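(* Let $n\ge2$ be even and $1\le\kappa<n$. For $q\in\{2,4\}$ let $A_{\mathrm{BAL},\kappa\text{-WMU},q,n}$ denote the maximum size of a balanced $\kappa$-WMU code in $\mathbb{F}_q^n$, and let $A_{\mathrm{BAL},\mathrm{MU},2,n}$ denote the maximum size of a balanced MU code in $\mathbb{F}_2^n$. Then (i) $c_2\,\frac{\binom{n}{n/2}2^n}{n-\kappa+1}\le A_{\mathrm{BAL},\kappa\text{-WMU},4,n}\le\frac{\binom{n}{n/2}2^n}{n-\kappa+1}$, where $c_2=\frac{3}{64}$; (ii) $A_{\mathrm{BAL},\kappa\text{-WMU},2,n}\le\frac{\binom{n}{n/2}}{n-\kappa+1}$; (iii) $\frac{\binom{n}{n/2}}{2(n-1)}\le A_{\mathrm{BAL},\mathrm{MU},2,n}\le\frac{\binom{n}{n/2}}{n}$.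
   Context: $\mathbb{F}_2=\{0,1\}$ and $\mathbb{F}_4$ is identified with $\{\mathtt{A},\mathtt{T},\mathtt{C},\mathtt{G}\}$. A binary sequence of length $n$ is balanced if exactly $n/2$ entries are $1$; a quaternary (DNA) sequence of length $n$ is balanced if exactly $n/2$ entries lie in $\{\mathtt{G},\mathtt{C}\}$; a code is balanced if every codeword is. A code $\mathcal{C}\subseteq\mathbb{F}_q^n$ is $\kappa$-WMU if for all not necessarily distinct $\mathbf{a},\mathbf{b}\in\mathcal{C}$ and all $\kappa\le l<n$, $(a_1,\dots,a_l)\ne(b_{n-l+1},\dots,b_n)$; an MU (mutually uncorrelated) code is a $1$-WMU code, i.e. no proper prefix of any codeword equals a suffix of any codeword. *)

From mathcomp Require Import all_boot all_order all_algebra.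
Set Implicit Arguments. Unset Strict Implicit. Unset Printing Implicit Defensive.

(* Words of length n over a finite alphabet T are n-tuples.
   F_2 = 'I_2 ; F_4 = 'I_4 with the identification 0=A, 1=T, 2=C, 3=G. *)

(* the "heavy" symbols: 1 in F_2, and {C,G} = {2,3} in F_4 *)
Definition heavy2 : pred 'I_2 := fun x => val x == 1%N.
Definition heavyGC : pred 'I_4 := fun x => (2 <= val x)%N.

Definition balanced_word (T : finType) (heavy : pred T) (n : nat)
  (w : n.-tuple T) : bool := count heavy w == n./2.

Definition balanced_code (T : finType) (heavy : pred T) (n : nat)
  (C : {set n.-tuple T}) : bool := [forall w in C, balanced_word heavy w].

Definition wmu_code (T : finType) (kappa n : nat) (C : {set n.-tuple T}) : bool :=
  [forall a in C, forall b in C, forall l : 'I_n,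
     (kappa <= l)%N ==> (take l a != drop (n - l) b)].

Definition mu_code (T : finType) (n : nat) (C : {set n.-tuple T}) : bool :=
  wmu_code 1 C.

Definition A_bal_wmu (T : finType) (heavy : pred T) (kappa n : nat) : nat :=
  \max_(C : {set n.-tuple T} | balanced_code heavy C && wmu_code kappa C) #|C|.

Definition A_bal_mu (T : finType) (heavy : pred T) (n : nat) : nat :=
  \max_(C : {set n.-tuple T} | balanced_code heavy C && mu_code C) #|C|.

From mathcomp Require Import all_boot all_order all_algebra.
From mathcomp Require Import zify.
Set Implicit Arguments. Unset Strict Implicit. Unset Printing Implicit Defensive.

(* Upper bounds: the rotations by [0, ..., n - kappa] places of the codewords
   of a balanced kappa-WMU code are pairwise distinct balanced words.

   Binary lower bound: the Dyck words (every nonempty proper prefix has a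
   heavy majority) form a balanced MU code, since a proper suffix of a Dyck
   word has a light majority.  By the cycle lemma, every balanced word is,
   up to complementation, a rotation of the first n - 1 letters of a Dyck word
   followed by a light letter, so there are at least C(n, n/2) / (2(n - 1))
   Dyck words.

   DNA lower bound: a DNA word is a pair of binary words, the first recording
   the GC content, so pairing a balanced binary code with any binary code
   gives a balanced DNA code, which is kappa-WMU as soon as one factor is.
   When p := n - kappa + 1 is comparable to n we pair the Dyck words with all
   binary words.  Otherwise we pair all balanced words with a marker code:
   words starting with k light letters, with a heavy letter at position p - 1
   and no other run of k light letters starting in (0, p - k].  Such codes
   are kappa-WMU, and for 2 p < 2 ^ k <= 4 p a union bound over the forbidden
   runs shows that they have density at least 3 / (64 p) (for p <= 6, k = p - 1
   already suffices). *)

(** * The rotation bound *)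

Lemma leq_card_inj_in (T T' : finType) (f : T -> T') (A : {pred T}) (B : {pred T'}) :
  {in A &, injective f} -> {in A, forall x, f x \in B} -> #|A| <= #|B|.
Proof.
move=> f_inj fAB; rewrite -(card_in_image f_inj); apply/subset_leq_card/subsetP.
by move=> _ /imageP[x Ax ->]; exact: fAB.
Qed.

Lemma count_rot (T : eqType) (p : pred T) s (w : seq T) : count p (rot s w) = count p w.
Proof. by apply/permP; rewrite perm_rot. Qed.

Section Overlaps.

Variables (T : finType) (n : nat).
Implicit Types (C : {set n.-tuple T}) (kappa : nat).

Lemma wmu_codeP kappa C :
  reflect (forall a b, a \in C -> b \in C -> forall l, kappa <= l < n ->
             take l a != drop (n - l) b)
          (wmu_code kappa C).
Proof.
apply: (iffP forall_inP) => [wmuC a b aC bC l /andP[kl ln] | wmuC a aC].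
  by have /forall_inP/(_ b bC)/forallP/(_ (Ordinal ln))/implyP := wmuC a aC; apply.
apply/forall_inP => b bC; apply/forallP => l; apply/implyP => kl.
by apply: wmuC; rewrite ?kl ?ltn_ord.
Qed.

Lemma wmu_code_mono kappa kappa' C :
  kappa <= kappa' -> wmu_code kappa C -> wmu_code kappa' C.
Proof.
move=> kk /wmu_codeP wmuC; apply/wmu_codeP => a b aC bC l /andP[kl ln].
by apply: wmuC; rewrite ?ln ?(leq_trans kk).
Qed.

(* Two distinct rotations of codewords by at most n - kappa places would make
   a prefix of length at least kappa coincide with a suffix. *)
Lemma wmu_rot_inj kappa C (a b : n.-tuple T) s s' :
  wmu_code kappa C -> a \in C -> b \in C -> s <= s' <= n - kappa ->
  rot s a = rot s' b -> a = b /\ s = s'.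
Proof.
move=> /wmu_codeP wmuC aC bC /andP[ss' s'n].
have -> : rot s' b = rot s (rot (s' - s) b).
  by rewrite -rotD ?size_tuple ?subnKC //; lia.
move/rot_inj => eab.
have [d0 | dpos] := posnP (s' - s).
  by rewrite d0 rot0 in eab; split; [exact: val_inj | lia].
have /negP[] : take (n - (s' - s)) a != drop (n - (n - (s' - s))) b.
  by apply: wmuC => //; apply/andP; split; lia.
rewrite eab subKn; last by lia.
by rewrite /rot take_size_cat // size_drop size_tuple.
Qed.

End Overlaps.

Section RotationBound.

Variables (T : finType) (heavy : pred T) (n : nat).

Lemma balanced_word_rot s (w : n.-tuple T) :
  balanced_word heavy (rot_tuple s w) = balanced_word heavy w.
Proof. by rewrite /balanced_word count_rot. Qed.

Lemma card_wmu_mul_le kappa (C : {set n.-tuple T}) :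
  balanced_code heavy C -> wmu_code kappa C ->
  #|C| * (n - kappa + 1) <= #|[set w : n.-tuple T | balanced_word heavy w]|.
Proof.
move=> /forall_inP balC wmuC.
rewrite -[n - kappa + 1]card_ord -cardsT -cardsX.
apply: (leq_card_inj_in (f := fun x : _ * 'I__ => rot_tuple x.2 x.1)).
  move=> [a s] [b s'] /setXP[aC _] /setXP[bC _] /(congr1 val) /= eab.
  have [ss' | s's] := leqP s s'.
    have ss'n : s <= s' <= n - kappa by rewrite ss' /=; have := ltn_ord s'; lia.
    by have [-> /val_inj ->] := wmu_rot_inj wmuC aC bC ss'n eab.
  have s'sn : s' <= s <= n - kappa by rewrite ltnW //=; have := ltn_ord s; lia.
  by have [-> /val_inj ->] := wmu_rot_inj wmuC bC aC s'sn (esym eab).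
by move=> [a s] /setXP[aC _]; rewrite inE balanced_word_rot balC.
Qed.

Lemma A_bal_wmu_mul_le kappa :
  A_bal_wmu heavy kappa n * (n - kappa + 1)
    <= #|[set w : n.-tuple T | balanced_word heavy w]|.
Proof.
have d_gt0 : 0 < n - kappa + 1 by rewrite addn1.
rewrite -leq_divRL //; apply/bigmax_leqP => C /andP[balC wmuC].
by rewrite leq_divRL // card_wmu_mul_le.
Qed.

Lemma leq_card_A_bal_wmu kappa (C : {set n.-tuple T}) :
  balanced_code heavy C -> wmu_code kappa C -> #|C| <= A_bal_wmu heavy kappa n.
Proof.
move=> balC wmuC.
by apply: (leq_bigmax_cond (F := fun C : {set _} => #|C|)); rewrite balC wmuC.
Qed.

Lemma A_bal_muE : A_bal_mu heavy n = A_bal_wmu heavy 1 n.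
Proof. by []. Qed.

End RotationBound.

(** * Binary words and DNA words *)

Lemma count_tnth (T : finType) n (p : pred T) (w : n.-tuple T) :
  count p w = #|[set i : 'I_n | p (tnth w i)]|.
Proof.
rewrite -{1}(map_tnth_enum w) enumT count_map cardsE cardE /enum_mem size_filter.
by apply: eq_count.
Qed.

Definition bit_of_bool (b : bool) : 'I_2 := if b then ord_max else ord0.

Lemma heavy2_bit b : heavy2 (bit_of_bool b) = b.
Proof. by case: b. Qed.

Lemma heavy2K : cancel heavy2 bit_of_bool.
Proof. by case=> [[|[|k]] lt_k2] //; apply: val_inj. Qed.

Lemma light_bitsE (s : seq 'I_2) : ~~ has heavy2 s -> s = nseq (size s) ord0.
Proof.
rewrite -all_predC => /allP light; apply/all_pred1P/allP => x /light /negbTE heavy_x.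
by rewrite /= -(heavy2K x) heavy_x.
Qed.

Lemma card_count_heavy2 n k :
  #|[set w : n.-tuple 'I_2 | count heavy2 w == k]| = 'C(n, k).
Proof.
pose support (w : n.-tuple 'I_2) := [set i | heavy2 (tnth w i)].
have support_bij : bijective support.
  exists (fun A : {set 'I_n} => [tuple bit_of_bool (i \in A) | i < n]) => [w | A].
    by apply: eq_from_tnth => i; rewrite tnth_mktuple inE heavy2K.
  by apply/setP => i; rewrite inE tnth_mktuple heavy2_bit.
rewrite -[X in 'C(X, _)](card_ord n) -card_draws -(on_card_preimset (onW_bij _ support_bij)).
by apply: eq_card => w; rewrite !inE count_tnth.
Qed.

Lemma card_balanced2 n :
  #|[set w : n.-tuple 'I_2 | balanced_word heavy2 w]| = 'C(n, n./2).
Proof. exact: card_count_heavy2. Qed.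

Lemma take_zip (S T : Type) l (s : seq S) (t : seq T) :
  take l (zip s t) = zip (take l s) (take l t).
Proof. by elim: l s t => [|l IHl] [|x s] [|y t] //=; rewrite IHl. Qed.

Lemma drop_zip (S T : Type) l (s : seq S) (t : seq T) :
  drop l (zip s t) = zip (drop l s) (drop l t).
Proof. by elim: l s t => [|l IHl] [|x s] [|y t] //=; case: (drop l _). Qed.

Lemma zip_inj (S T : Type) (s1 s2 : seq S) (t1 t2 : seq T) :
  size s1 = size t1 -> size s2 = size t2 -> zip s1 t1 = zip s2 t2 -> s1 = s2 /\ t1 = t2.
Proof.
move=> st1 st2 e; move: (congr1 unzip1 e) (congr1 unzip2 e).
by rewrite !unzip1_zip ?unzip2_zip ?st1 ?st2.
Qed.

Section ProductCode.

Variables (A B D : finType) (f : A * B -> D) (heavyA : pred A) (heavyD : pred D).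
Hypotheses (f_inj : injective f) (heavy_f : forall x, heavyD (f x) = heavyA x.1).
Variable n : nat.

Definition prod_word (x : n.-tuple A * n.-tuple B) : n.-tuple D :=
  map_tuple f (zip_tuple x.1 x.2).

Definition prod_code (H : {set n.-tuple A}) (E : {set n.-tuple B}) : {set n.-tuple D} :=
  prod_word @: setX H E.

Lemma prod_word_overlap x y l m :
  take l (prod_word x) = drop m (prod_word y) ->
  take l x.1 = drop m y.1 /\ take l x.2 = drop m y.2.
Proof.
rewrite /prod_word /= -map_take -map_drop take_zip drop_zip => /(inj_map f_inj).
by apply: zip_inj; rewrite ?size_take ?size_drop !size_tuple.
Qed.

Lemma prod_word_inj : injective prod_word.
Proof.
move=> [x1 x2] [y1 y2] /(congr1 val) eq_xy.
have /prod_word_overlap[/= e1 e2] : take n (prod_word (x1, x2)) = drop 0 (prod_word (y1, y2)).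
  by rewrite drop0 take_oversize ?size_tuple ?eq_xy.
by congr pair; apply: val_inj; rewrite -[RHS]drop0 -[LHS](take_oversize (n := n)) ?size_tuple.
Qed.

Lemma card_prod_code H E : #|prod_code H E| = #|H| * #|E|.
Proof. by rewrite card_imset ?cardsX //; exact: prod_word_inj. Qed.

Lemma count_prod_word x : count heavyD (prod_word x) = count heavyA x.1.
Proof.
rewrite /= count_map (eq_count (a2 := preim fst heavyA)) => [|z]; last exact: heavy_f.
by rewrite -count_map -[map fst _]/(unzip1 _) unzip1_zip ?size_tuple.
Qed.

Lemma balanced_prod_code H E :
  balanced_code heavyA H -> balanced_code heavyD (prod_code H E).
Proof.
move=> /forall_inP balH; apply/forall_inP => _ /imsetP[[x1 x2] /setXP[x1H _] ->].
by rewrite /balanced_word count_prod_word; exact: balH.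
Qed.

Lemma wmu_prod_code kappa H E :
  wmu_code kappa H \/ wmu_code kappa E -> wmu_code kappa (prod_code H E).
Proof.
move=> wmuHE; apply/wmu_codeP => a b /imsetP[[x1 x2] /setXP[x1H x2E] ->].
move=> /imsetP[[y1 y2] /setXP[y1H y2E] ->] l kln.
apply/eqP => /prod_word_overlap[/= eq1 eq2].
case: wmuHE => /wmu_codeP wmu.
  by have := wmu _ _ x1H y1H l kln; rewrite eq1 eqxx.
by have := wmu _ _ x2E y2E l kln; rewrite eq2 eqxx.
Qed.

End ProductCode.

Definition dna_of_bits (x : 'I_2 * 'I_2) : 'I_4 := inord (2 * x.1 + x.2).
Definition bits_of_dna (y : 'I_4) : 'I_2 * 'I_2 := (inord (y %/ 2), inord (y %% 2)).

Lemma dna_of_bitsE x : dna_of_bits x = 2 * x.1 + x.2 :> nat.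
Proof. by case: x => [[a ha] [b hb]]; rewrite inordK //=; lia. Qed.

Lemma dna_of_bitsK : cancel dna_of_bits bits_of_dna.
Proof.
by move=> [[a ha] [b hb]]; congr pair; apply: val_inj; rewrite /= dna_of_bitsE inordK /=; lia.
Qed.

Lemma bits_of_dnaK : cancel bits_of_dna dna_of_bits.
Proof. by move=> [y hy]; apply: val_inj; rewrite /= dna_of_bitsE /= !inordK; lia. Qed.

Lemma heavyGC_dna_of_bits x : heavyGC (dna_of_bits x) = heavy2 x.1.
Proof.
rewrite /heavyGC /heavy2 -[val _]/(nat_of_ord _) dna_of_bitsE.
by case: x => [[a ha] [b hb]] /=; apply/idP/eqP; lia.
Qed.

Lemma card_balancedGC_le n :
  #|[set w : n.-tuple 'I_4 | balanced_word heavyGC w]| <= 'C(n, n./2) * 2 ^ n.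
Proof.
rewrite -card_balanced2 -[X in X ^ n](card_ord 2) -card_tuple -cardsT.
rewrite -(card_prod_code (can_inj dna_of_bitsK)).
apply/subset_leq_card/subsetP => w; rewrite inE => balw.
apply/imsetP; exists (map_tuple (fst \o bits_of_dna) w, map_tuple (snd \o bits_of_dna) w).
  rewrite !inE andbT /balanced_word -(eqP balw) count_map.
  by apply/eqP/eq_count => y /=; rewrite -{2}(bits_of_dnaK y) heavyGC_dna_of_bits.
apply: val_inj; rewrite /= zip_map -map_comp -[LHS]map_id; apply: eq_map => y.
exact: (esym (bits_of_dnaK y)).
Qed.

(** * Dyck codes *)

Lemma leq_mulD_lex X Y a b M :
  X * M + a <= Y * M + b -> a < M -> b < M -> X <= Y /\ (X = Y -> a <= b).
Proof.
move=> le_ab lt_aM lt_bM; split; last by move=> eXY; rewrite eXY leq_add2l in le_ab.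
rewrite leqNgt; apply/negP => lt_YX.
have : Y.+1 * M <= X * M by rewrite leq_mul2r lt_YX orbT.
by rewrite mulSn; lia.
Qed.

Section CycleLemma.

Variables (T : Type) (p : pred T) (u : seq T).

(* [r] minimises [2 * count p (take i u) - i], the last minimiser being
   taken; the key [K] encodes this lexicographic order in [nat]. *)
Lemma cycle_pivot : 0 < size u ->
  exists2 r, r < size u & forall i, i < size u ->
    2 * count p (take r u) + i <= 2 * count p (take i u) + r /\
    (r < i -> 2 * count p (take r u) + i < 2 * count p (take i u) + r).
Proof.
set N := size u => N_gt0.
have c_le i : count p (take i u) <= i.
  by rewrite (leq_trans (count_size _ _)) // size_take_min geq_minl.
pose K (i : 'I_N) := (2 * count p (take i u) + N - i) * N.+1 + (N - i).
have [r _ minK] := @arg_minnP _ (Ordinal N_gt0) predT K isT.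
exists r => // i lt_iN.
have lt_key k : N - k < N.+1 by rewrite ltnS leq_subr.
have [/= le_key eq_key] := leq_mulD_lex (minK (Ordinal lt_iN) isT) (lt_key r) (lt_key i).
have := c_le i; have := c_le r; have := ltn_ord r => *.
by split=> [|lt_ri]; lia.
Qed.

Lemma cycle_lemma : 2 * count p u = (size u).+1 ->
  exists2 r, r < size u &
    forall j, 0 < j <= size u -> j < 2 * count p (take j (rot r u)).
Proof.
move=> total; have u_gt0 : 0 < size u by case: (u) total.
have [r lt_rN pivot] := cycle_pivot u_gt0.
exists r => // j /andP[j_gt0 le_jN].
have count_u : count p u = count p (take r u) + count p (drop r u).
  by rewrite -count_cat cat_take_drop.
rewrite /rot take_cat size_drop; case: (ltnP j (size u - r)) => [lt_j | le_j].
  have [_] := pivot (r + j) ltac:(lia).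
  by rewrite takeD count_cat; lia.
rewrite count_cat take_takel; last by lia.
have [le_pivot _] := pivot (j - (size u - r)) ltac:(lia).
lia.
Qed.

End CycleLemma.

Section DyckCode.

Variables (T : finType) (heavy : pred T) (n : nat).

Definition dyck_code : {set n.-tuple T} :=
  [set w | balanced_word heavy w &&
           [forall j : 'I_n, (0 < j) ==> (j < 2 * count heavy (take j w))]].

Lemma dyck_code_balanced : balanced_code heavy dyck_code.
Proof. by apply/forall_inP => w; rewrite inE => /andP[]. Qed.

Lemma dyck_code_mu : ~~ odd n -> mu_code dyck_code.
Proof.
move=> n_even; apply/wmu_codeP => a b; rewrite !inE.
move=> /andP[_ /forallP a_pre] /andP[/eqP b_bal /forallP b_pre] l /andP[l_gt0 lt_ln].
apply/eqP => overlap; have lt_nl : n - l < n by lia.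
have a_maj : l < 2 * count heavy (take l a) by apply: (implyP (a_pre (Ordinal lt_ln))).
have b_maj : n - l < 2 * count heavy (take (n - l) b).
  by apply: (implyP (b_pre (Ordinal lt_nl))); rewrite /= subn_gt0.
have count_b : count heavy b = count heavy (take (n - l) b) + count heavy (drop (n - l) b).
  by rewrite -count_cat cat_take_drop.
rewrite overlap in a_maj; have := even_halfK n_even; rewrite -mul2n; lia.
Qed.

End DyckCode.

Definition bit_flip (x : 'I_2) : 'I_2 := bit_of_bool (~~ heavy2 x).

Lemma bit_flipK : involutive bit_flip.
Proof. by case=> [[|[|k]] lt_k2] //; apply: val_inj. Qed.

Definition flip_if (b : bool) (s : seq 'I_2) : seq 'I_2 :=
  if b then map bit_flip s else s.

Lemma flip_ifK b : involutive (flip_if b).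
Proof. by case: b => s //=; rewrite (mapK bit_flipK). Qed.

Lemma size_flip_if b s : size (flip_if b s) = size s.
Proof. by case: b; rewrite ?size_map. Qed.

Lemma count_flip_if b s :
  2 * count heavy2 s = size s -> 2 * count heavy2 (flip_if b s) = size s.
Proof.
have flip_light : preim bit_flip heavy2 =1 predC heavy2 by move=> x; rewrite /= heavy2_bit.
case: b => //= s_bal; rewrite count_map (eq_count flip_light).
by have := count_predC heavy2 s; lia.
Qed.

Lemma last_flip_if s : last ord0 (flip_if (heavy2 (last ord0 s)) s) = ord0.
Proof.
case: s => [|x s] //=; rewrite /flip_if; case: ifP => [heavy_last | /negbT light_last].
  by rewrite /= (last_map bit_flip) /bit_flip heavy_last.
by rewrite /= -[last x s]heavy2K (negbTE light_last).
Qed.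

Lemma exists_rot_dyck_code n (u : seq 'I_2) :
  0 < n -> size u = n.-1 -> 2 * count heavy2 u = n ->
  exists2 r, r < n.-1 &
    exists2 d : n.-tuple 'I_2, d \in dyck_code heavy2 n & val d = rcons (rot r u) ord0.
Proof.
move=> n_gt0 u_size u_bal.
have [r lt_r prefix_maj] := cycle_lemma (p := heavy2) (u := u) ltac:(lia).
rewrite u_size in lt_r prefix_maj; exists r => //.
have d_size : size (rcons (rot r u) ord0) == n by rewrite size_rcons size_rot u_size prednK.
exists (Tuple d_size) => //.
rewrite inE /balanced_word /= -cats1 count_cat count_rot.
apply/andP; split; first by rewrite addn0 -[X in X./2]u_bal mul2n doubleK.
apply/forallP => j; apply/implyP => j_gt0.
have le_j : j <= n.-1 by rewrite -ltnS prednK.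
by rewrite takel_cat ?size_rot ?u_size // prefix_maj ?j_gt0.
Qed.

Definition dyck_decode n (x : n.-tuple 'I_2 * (bool * 'I_n.-1)) : n.-tuple 'I_2 :=
  insubd x.1 (flip_if x.2.1 (rcons (rotr x.2.2 (take n.-1 x.1)) ord0)).

Lemma binom_le_card_dyck n : 0 < n -> ~~ odd n ->
  'C(n, n./2) <= #|dyck_code heavy2 n| * (2 * (n - 1)).
Proof.
move=> n_gt0 n_even.
have -> : 2 * (n - 1) = #|[set: bool * 'I_n.-1]|.
  by rewrite cardsT card_prod card_bool card_ord subn1.
rewrite -card_balanced2 -cardsX; apply: leq_trans (leq_imset_card (@dyck_decode n) _).
apply/subset_leq_card/subsetP => w; rewrite inE => /eqP w_bal.
set b := heavy2 (last ord0 w); set s := flip_if b w.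
have s_size : size s = n by rewrite size_flip_if size_tuple.
have s_bal : 2 * count heavy2 s = n.
  by rewrite count_flip_if size_tuple // w_bal mul2n even_halfK.
have s_rcons : s = rcons (take n.-1 s) ord0.
  have lt_n : n.-1 < size s by rewrite s_size ltn_predL.
  rewrite -(last_flip_if w) -/b -/s -nth_last s_size -(take_nth ord0 lt_n) prednK //.
  by rewrite -s_size take_size.
have u_size : size (take n.-1 s) = n.-1 by rewrite size_takel // s_size leq_pred.
have u_bal : 2 * count heavy2 (take n.-1 s) = n.
  by rewrite -[RHS]s_bal [in RHS]s_rcons -cats1 count_cat addn0.
have [r lt_r [d d_dyck d_val]] := exists_rot_dyck_code n_gt0 u_size u_bal.
apply/imsetP; exists (d, (b, Ordinal lt_r)); first by apply/setXP; rewrite in_setT.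
apply: val_inj; rewrite /dyck_decode /= d_val -[rcons (rot r _) _]cats1.
rewrite take_size_cat ?size_rot // rotK -s_rcons flip_ifK insubdK //.
by rewrite -topredE /= size_tuple.
Qed.

(** * Marker codes *)

Lemma card_bigcup_le (I T : finType) (P : pred I) (A : I -> {set T}) :
  #|\bigcup_(i | P i) A i| <= \sum_(i | P i) #|A i|.
Proof.
elim/big_rec2: _ => [|i m U _ le_Um]; first by rewrite cards0.
by rewrite (leq_trans (leq_card_setU _ _).1) ?leq_add2l.
Qed.

Lemma card_window_le (T : finType) M j k (z : seq T) : j + k <= M ->
  #|[set y : M.-tuple T | take k (drop j y) == z]| <= #|T| ^ (M - k).
Proof.
move=> le_jkM.
have cut_size (y : M.-tuple T) : size (take j y ++ drop (j + k) y) == M - k.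
  by rewrite size_cat size_takel ?size_drop ?size_tuple //; apply/eqP; lia.
rewrite -card_tuple -cardsT.
apply: (leq_card_inj_in (f := fun y => Tuple (cut_size y))) => // y1 y2.
rewrite !inE => /eqP win1 /eqP win2 /(congr1 val) /eqP /=.
rewrite eqseq_cat ?size_takel ?size_tuple //; try lia.
case/andP=> /eqP head_eq /eqP tail_eq; apply: val_inj => /=.
rewrite -(cat_take_drop j y1) -(cat_take_drop j y2) head_eq; congr (_ ++ _).
rewrite -(cat_take_drop k (drop j y1)) -(cat_take_drop k (drop j y2)) win1 win2.
by rewrite !drop_drop addnC tail_eq.
Qed.

Definition is_marked p k (e : seq 'I_2) : bool :=
  [&& ~~ has heavy2 (take k e), heavy2 (nth ord0 e p.-1)
    & [forall i : 'I_p, (0 < i) && (i + k <= p) ==> has heavy2 (take k (drop i e))]].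

Definition marker_code n p k : {set n.-tuple 'I_2} := [set e : n.-tuple 'I_2 | is_marked p k e].

(* The suffix of length [l] of [b] starts at [i := n - l], where [0 < i < p];
   the window of length [k] at [i] either lies in the first [p] letters, hence
   contains a heavy letter, or contains the heavy letter at [p - 1].  Either
   way it cannot match the [k] light letters that start [a]. *)
Lemma marker_code_wmu n p k kappa :
  n - kappa < p -> p <= kappa -> wmu_code kappa (marker_code n p k).
Proof.
move=> lt_np le_pk; apply/wmu_codeP => a b; rewrite !inE.
move=> /and3P[a_light _ _] /and3P[_ b_heavy /forallP b_windows] l /andP[le_kl lt_ln].
apply/eqP => overlap; set i := n - l; have lt_ip : i < p by rewrite /i; lia.
have [le_ikp | lt_pik] := leqP (i + k) p.
  have /implyP := b_windows (Ordinal lt_ip); rewrite /= /i subn_gt0 lt_ln le_ikp.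
  by rewrite -overlap take_takel ?(negbTE a_light) //; lia.
move/negP: a_light; apply; apply/(has_nthP ord0); exists (p.-1 - i).
  by rewrite size_take size_tuple; case: ifP; lia.
rewrite nth_take; last by lia.
rewrite -(nth_take _ (_ : p.-1 - i < l)); last by lia.
by rewrite overlap nth_drop subnKC //; lia.
Qed.

Lemma has_window (e : seq 'I_2) i k r :
  r < k -> i + r < size e -> heavy2 (nth ord0 e (i + r)) -> has heavy2 (take k (drop i e)).
Proof.
move=> lt_rk lt_ire heavy_ir; apply/(has_nthP ord0); exists r.
  by rewrite size_take size_drop; case: ifP; lia.
by rewrite nth_take // nth_drop.
Qed.

Definition marker_word k L (y : seq 'I_2) : seq 'I_2 :=
  nseq k ord0 ++ ord_max :: take L y ++ ord_max :: drop L y.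

Lemma marker_wordE k L y : L <= size y ->
  [/\ take k (marker_word k L y) = nseq k ord0,
      nth ord0 (marker_word k L y) k = ord_max,
      nth ord0 (marker_word k L y) (k + L).+1 = ord_max
    & forall i, i < L -> nth ord0 (marker_word k L y) (k.+1 + i) = nth ord0 y i].
Proof.
move=> le_Ly; rewrite /marker_word take_size_cat ?size_nseq // cat_nseq.
have size_x : size (take L y) = L by rewrite size_takel.
split=> // [||i lt_iL]; rewrite nth_ncons.
- by rewrite ltnn subnn.
- by rewrite ifF ?subSn ?addKn /= ?nth_cat ?size_x ?ltnn ?subnn //; lia.
- by rewrite ifF ?addSn ?subSn ?addKn /= ?nth_cat ?size_x ?lt_iL ?nth_take //; lia.
Qed.

Lemma size_marker_word k L y : L <= size y -> size (marker_word k L y) = k + 2 + size y.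
Proof.
move=> le_Ly; rewrite /marker_word size_cat size_nseq /= size_cat /= size_takel ?size_drop //.
by lia.
Qed.

Lemma marker_word_marked p k (y : seq 'I_2) : 0 < k -> k + 2 <= p -> p - k - 2 <= size y ->
  (forall j, j + k <= p - k - 2 -> has heavy2 (take k (drop j y))) ->
  is_marked p k (marker_word k (p - k - 2) y).
Proof.
set L := p - k - 2 => k_gt0 le_kp le_Ly y_windows.
have [e_take e_k e_last e_mid] := marker_wordE k le_Ly.
have e_size := size_marker_word k le_Ly.
have p_eq : p.-1 = (k + L).+1 by rewrite /L; lia.
apply/and3P; split; first by rewrite e_take has_nseq andbF.
  by rewrite p_eq e_last.
apply/forallP => -[i lt_ip] /=; apply/implyP => /andP[i_gt0 le_ikp].
have [le_ik | lt_ki] := leqP i k.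
  by apply: (has_window (r := k - i)); rewrite ?subnKC ?e_k //; lia.
have [eq_ikp | ne_ikp] := eqVneq (i + k) p.
  apply: (has_window (r := k.-1)); try lia.
  by rewrite (_ : i + k.-1 = (k + L).+1) ?e_last //; lia.
have /(has_nthP ord0)[r lt_r] := y_windows (i - k.+1) ltac:(lia).
have lt_rk : r < k by rewrite (leq_trans lt_r) // size_take_min geq_minl.
rewrite nth_take // nth_drop => heavy_r.
apply: (has_window (r := r)) => //; first lia.
by rewrite (_ : i + r = k.+1 + (i - k.+1 + r)) ?e_mid //; lia.
Qed.

Lemma card_light_window_le M L k : L <= M ->
  #|[set y : M.-tuple 'I_2 |
     ~~ [forall j : 'I_L, (j + k <= L) ==> has heavy2 (take k (drop j y))]]|
    <= L * 2 ^ (M - k).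
Proof.
move=> le_LM.
pose window j := [set y : M.-tuple 'I_2 | take k (drop j y) == nseq k ord0].
apply: (@leq_trans #|\bigcup_(j < L | j + k <= L) window j|).
  apply/subset_leq_card/subsetP => y; rewrite inE => /forallPn[j].
  rewrite negb_imply => /andP[le_jkL light_j]; apply/bigcupP; exists j => //.
  rewrite inE {1}(light_bitsE light_j) size_takel ?size_drop ?size_tuple //; lia.
apply: (leq_trans (card_bigcup_le _ _)); rewrite big_mkcond /=.
rewrite -[X in X * _](card_ord L) -sum_nat_const; apply: leq_sum => j _.
case: ifP => // le_jkL; rewrite -[X in X ^ _](card_ord 2).
by apply: card_window_le; lia.
Qed.

Lemma card_marker_code_ge n p k : 0 < k -> k + 2 <= p <= n ->
  2 ^ (n - k - 2) <= #|marker_code n p k| + (p - k - 2) * 2 ^ (n - k - 2 - k).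
Proof.
move=> k_gt0 /andP[le_kp le_pn]; set M := n - k - 2; set L := p - k - 2.
have le_LM : L <= M by rewrite /L /M; lia.
pose ok (y : M.-tuple 'I_2) :=
  [forall j : 'I_L, (j + k <= L) ==> has heavy2 (take k (drop j y))].
have word_size (y : M.-tuple 'I_2) : size (marker_word k L y) == n.
  by rewrite size_marker_word size_tuple // /M; apply/eqP; lia.
pose F (y : M.-tuple 'I_2) : n.-tuple 'I_2 := Tuple (word_size y).
have ok_marked : #|[set y | ok y]| <= #|marker_code n p k|.
  apply: (leq_card_inj_in (f := F)) => [y1 y2 _ _ /(congr1 val) | y].
    move=> /(congr1 (drop k)); rewrite /marker_word !drop_size_cat ?size_nseq //.
    case=> /eqP; rewrite eqseq_cat ?size_takel ?size_tuple // => /andP[/eqP e1 /eqP[e2]].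
    by apply: val_inj; rewrite /= -(cat_take_drop L y1) -(cat_take_drop L y2) e1 e2.
  rewrite !inE => /forallP ok_y; apply: marker_word_marked; rewrite ?size_tuple //.
  move=> j le_jkL; have lt_jL : j < L by lia.
  exact: (implyP (ok_y (Ordinal lt_jL)) le_jkL).
have bad_le : #|[set y | ~~ ok y]| <= L * 2 ^ (M - k) := card_light_window_le k le_LM.
have := cardsC [set y | ok y]; rewrite card_tuple card_ord.
rewrite (eq_card (_ : ~: [set y | ok y] =i [set y | ~~ ok y])) => [|y]; last by rewrite !inE.
lia.
Qed.

Lemma card_marker_code_pred n p : 1 < p <= n -> 2 ^ (n - p) <= #|marker_code n p p.-1|.
Proof.
case/andP=> p_gt1 le_pn; pose e (y : seq 'I_2) := nseq p.-1 ord0 ++ ord_max :: y.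
have e_size (y : (n - p).-tuple 'I_2) : size (e y) == n.
  by rewrite size_cat size_nseq /= size_tuple; apply/eqP; lia.
have e_light y : ~~ has heavy2 (take p.-1 (e y)).
  by rewrite take_size_cat ?size_nseq // has_nseq andbF.
have e_heavy y : heavy2 (nth ord0 (e y) p.-1) by rewrite nth_cat size_nseq ltnn subnn.
rewrite -[X in X ^ _](card_ord 2) -card_tuple -cardsT.
apply: (leq_card_inj_in (f := fun y => Tuple (e_size y))) => [y1 y2 _ _ /(congr1 val) | y _].
  by move=> /(congr1 (drop p.-1)); rewrite !drop_size_cat ?size_nseq // => -[] /val_inj.
rewrite inE; apply/and3P; split; [exact: e_light | exact: e_heavy |].
apply/forallP => i; apply/implyP => /andP[i_gt0 le_ip].
have e_y_size : p.-1 < size (e y) by rewrite (eqP (e_size y)); lia.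
apply: (has_window (r := p.-2)); first lia.
  by rewrite (_ : i + p.-2 = p.-1); [exact: e_y_size | lia].
by rewrite (_ : i + p.-2 = p.-1) ?e_heavy //; lia.
Qed.

Lemma mul4_lt_exp2_pred p : 7 <= p -> 4 * p < 2 ^ p.-1.
Proof.
elim: p => // p IHp; rewrite ltnS leq_eqVlt => /orP[/eqP <- // | le_7p].
by rewrite /= -[p]prednK ?expnS; [move: (IHp le_7p); lia | lia].
Qed.

(* [12 X ^ 2 + 64 p ^ 2 <= 64 p X] is [(4 p - X) (3 X - 4 p) >= 0]. *)
Lemma marker_density_arith p X Z E L :
  2 * p < X <= 4 * p -> L <= p -> Z * X <= E + L * Z -> 3 * (Z * X * X * 4) <= 64 * p * E.
Proof.
move=> /andP[lt_pX le_Xp] le_Lp le_ZX.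
have [a def_a] : exists a, 4 * p = X + a by exists (4 * p - X); lia.
have [b def_b] : exists b, 3 * X = 4 * p + b by exists (3 * X - 4 * p); lia.
have quad : 12 * X * X + 64 * p * L <= 64 * p * X.
  have : 64 * p * L <= 64 * p * p by rewrite leq_mul2l le_Lp orbT.
  have : 12 * X * X + 64 * p * p + 4 * a * b = 64 * p * X by nia.
  lia.
nia.
Qed.

Lemma card_marker_code_log n p : 6 < p -> 2 * p <= n ->
  3 * 2 ^ n <= 64 * p * #|marker_code n p (trunc_log 2 (4 * p))|.
Proof.
move=> lt_6p le_2pn; set k := trunc_log 2 (4 * p).
have le_kp : 2 ^ k <= 4 * p by apply: trunc_logP; lia.
have lt_pk : 2 * p < 2 ^ k.
  by have := trunc_log_ltn (4 * p) (ltnSn 1); rewrite -/k expnS; lia.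
have k_gt0 : 0 < k by rewrite trunc_log_gt0; lia.
have lt_kp : k < p.-1.
  by rewrite -(ltn_exp2l _ _ (ltnSn 1)) (leq_ltn_trans le_kp) ?mul4_lt_exp2_pred.
have := @card_marker_code_ge n p k k_gt0 ltac:(lia).
have -> : 2 ^ (n - k - 2) = 2 ^ (n - k - 2 - k) * 2 ^ k.
  by rewrite -expnD; congr (2 ^ _); lia.
have -> : 2 ^ n = 2 ^ (n - k - 2 - k) * 2 ^ k * 2 ^ k * 4.
  by rewrite -!expnD -[4]/(2 ^ 2) -expnD; congr (2 ^ _); lia.
by apply: marker_density_arith; rewrite ?lt_pk ?le_kp //; lia.
Qed.

Lemma exists_dense_wmu_code n kappa : kappa < n -> 2 * (n - kappa + 1) <= n ->
  exists2 E : {set n.-tuple 'I_2},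
    wmu_code kappa E & 3 * 2 ^ n <= 64 * (n - kappa + 1) * #|E|.
Proof.
move=> lt_kn; set p := n - kappa + 1 => le_2pn.
have wmu_k k : wmu_code kappa (marker_code n p k) by apply: marker_code_wmu; lia.
have [le_p6 | lt_6p] := leqP p 6; last first.
  by exists (marker_code n p (trunc_log 2 (4 * p))); rewrite ?card_marker_code_log.
exists (marker_code n p p.-1) => //.
have := @card_marker_code_pred n p ltac:(lia).
have -> : 2 ^ n = 2 ^ p * 2 ^ (n - p) by rewrite -expnD subnKC //; lia.
have small q : 1 < q <= 6 -> 3 * 2 ^ q <= 64 * q by case: q => [|[|[|[|[|[|[|q]]]]]]].
have := small p ltac:(lia).
by move: (2 ^ p) (2 ^ (n - p)) => P Z; nia.
Qed.

Lemma A_bal_wmu_GC_ge_prod n kappa (H E : {set n.-tuple 'I_2}) :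
  balanced_code heavy2 H -> wmu_code kappa H \/ wmu_code kappa E ->
  #|H| * #|E| <= A_bal_wmu heavyGC kappa n.
Proof.
move=> balH wmuHE; have dna_inj := can_inj dna_of_bitsK.
rewrite -(card_prod_code dna_inj).
exact: leq_card_A_bal_wmu (balanced_prod_code heavyGC_dna_of_bits E balH)
                          (wmu_prod_code dna_inj wmuHE).
Qed.

Lemma A_bal_wmu_GC_ge n kappa : 0 < n -> ~~ odd n -> 0 < kappa < n ->
  3 * ('C(n, n./2) * 2 ^ n) <= 64 * (n - kappa + 1) * A_bal_wmu heavyGC kappa n.
Proof.
move=> n_gt0 n_even /andP[kappa_gt0 lt_kn]; set p := n - kappa + 1.
have [le_n_p | lt_p_n] := leqP (3 * (n - 1)) (32 * p).
  have dyck_wmu := wmu_code_mono kappa_gt0 (dyck_code_mu heavy2 n_even).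
  have := A_bal_wmu_GC_ge_prod (E := [set: n.-tuple 'I_2]) (dyck_code_balanced heavy2 n)
                               (or_introl dyck_wmu).
  rewrite cardsT card_tuple card_ord; have := binom_le_card_dyck n_gt0 n_even.
  move: le_n_p; move: 'C(n, n./2) (2 ^ n) #|dyck_code heavy2 n| (A_bal_wmu heavyGC kappa n).
  move: (n - 1) => m C P D A le_m_p le_C_D le_DP_A.
  have h1 : C * P <= D * (2 * m) * P := leq_mul le_C_D (leqnn P).
  have h2 : 3 * (2 * m) * (D * P) <= 64 * p * (D * P).
    by rewrite leq_mul2r; apply/orP; right; lia.
  have h3 : 64 * p * (D * P) <= 64 * p * A := leq_mul (leqnn _) le_DP_A.
  lia.
have [E wmuE denseE] := exists_dense_wmu_code lt_kn ltac:(lia).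
have balanced_words : balanced_code heavy2 [set w : n.-tuple 'I_2 | balanced_word heavy2 w].
  by apply/forall_inP => w; rewrite inE.
have := A_bal_wmu_GC_ge_prod balanced_words (or_intror wmuE); rewrite card_balanced2.
move: denseE; move: 'C(n, n./2) (2 ^ n) #|E| (A_bal_wmu heavyGC kappa n).
move=> C P e A dense le_Ce_A.
have h1 : C * (3 * P) <= C * (64 * p * e) := leq_mul (leqnn C) dense.
have h2 : 64 * p * (C * e) <= 64 * p * A := leq_mul (leqnn _) le_Ce_A.
lia.
Qed.

Import Order.TTheory GRing.Theory Num.Theory.
Local Open Scope ring_scope.

Lemma ler_nat_divr (R : numFieldType) (a b d : nat) :
  (0 < d)%N -> (a * d <= b)%N -> a%:R <= b%:R / d%:R :> R.
Proof. by move=> d_gt0 le_adb; rewrite ler_pdivlMr ?ltr0n // -natrM ler_nat. Qed.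

Lemma ler_nat_divl (R : numFieldType) (a b d : nat) :
  (0 < d)%N -> (b <= a * d)%N -> b%:R / d%:R <= a%:R :> R.
Proof. by move=> d_gt0 le_bad; rewrite ler_pdivrMr ?ltr0n // -natrM ler_nat. Qed.

Lemma ler_nat_scale_divl (R : numFieldType) (a c b d e : nat) :
  (0 < c)%N -> (0 < d)%N -> (a * b <= c * d * e)%N -> a%:R / c%:R * b%:R / d%:R <= e%:R :> R.
Proof.
move=> c_gt0 d_gt0 le_abcde; rewrite ler_pdivrMr ?ltr0n // mulrAC ler_pdivrMr ?ltr0n //.
by rewrite -!natrM ler_nat; lia.
Qed.

Theorem theorem6 (n kappa : nat) :
  (2 <= n)%N -> ~~ odd n -> (1 <= kappa)%N -> (kappa < n)%N ->
  [/\ (3%:R / 64%:R : rat) * ('C(n, n./2) * 2 ^ n)%:R / (n - kappa + 1)%:R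
        <= (A_bal_wmu heavyGC kappa n)%:R,
      (A_bal_wmu heavyGC kappa n)%:R
        <= ('C(n, n./2) * 2 ^ n)%:R / (n - kappa + 1)%:R :> rat,
      (A_bal_wmu heavy2 kappa n)%:R
        <= ('C(n, n./2))%:R / (n - kappa + 1)%:R :> rat,
      ('C(n, n./2))%:R / (2 * (n - 1))%:R <= (A_bal_mu heavy2 n)%:R :> rat
    & (A_bal_mu heavy2 n)%:R <= ('C(n, n./2))%:R / n%:R :> rat].
Proof.
move=> n_ge2 n_even kappa_gt0 lt_kn.
have n_gt0 : (0 < n)%N by apply: ltnW.
have p_gt0 : (0 < n - kappa + 1)%N by rewrite addn1.
have bin_ub k : (A_bal_wmu heavy2 k n * (n - k + 1) <= 'C(n, n./2))%N.
  by rewrite -card_balanced2 A_bal_wmu_mul_le.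
split.
- by apply: ler_nat_scale_divl => //; rewrite A_bal_wmu_GC_ge ?kappa_gt0.
- apply: ler_nat_divr => //.
  exact: leq_trans (A_bal_wmu_mul_le _ _ _) (card_balancedGC_le n).
- exact: ler_nat_divr.
- apply: ler_nat_divl; first by rewrite muln_gt0 subn_gt0.
  apply: leq_trans (binom_le_card_dyck n_gt0 n_even) _; rewrite leq_mul2r A_bal_muE.
  apply/orP; right; apply: leq_card_A_bal_wmu; first exact: dyck_code_balanced.
  exact: dyck_code_mu.
- by apply: ler_nat_divr => //; rewrite A_bal_muE -[X in (_ * X)%N](subnK n_gt0) bin_ub.
Qed.
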